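(* Let $n\ge 3$ and let $C\in\mathbb{R}^{n\times n}$ be nonnegative, doubly stochastic, irreducible, with zero diagonal entries. Let $x(s)$ evolve by the Modified DeGroot-Friedkin model $x(s+1)=C^\top x(s)+X(s)x(s)-C^\top X(s)x(s)$, $X(s)=\mathrm{diag}(x(s))$. Then for every initial condition $x(0)\in\Delta\setminus\{e_1,\dots,e_n\}$, $x(s)\to\tfrac1n\mathbf 1$ as $s\to\infty$.
   Context: $\Delta=\{x\in\mathbb{R}^n: x\ge 0,\ \sum_i x_i=1\}$; $e_i$ is the $i$th standard basis vector; $\mathbf 1$ is the all-ones vector. *)

From Stdlib Require Import Reals.
Open Scope R_scope.

(* Vectors in R^n are functions nat -> R (only indices < n matter);
   n x n matrices are functions nat -> nat -> R (only indices < n matter). *)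

Fixpoint vsum (n : nat) (f : nat -> R) : R :=
  match n with
  | O => 0
  | S m => vsum m f + f m
  end.

Definition mmul (n : nat) (A B : nat -> nat -> R) : nat -> nat -> R :=
  fun i j => vsum n (fun k => A i k * B k j).

Definition mid : nat -> nat -> R := fun i j => if Nat.eqb i j then 1 else 0.

Fixpoint mpow (n : nat) (C : nat -> nat -> R) (k : nat) : nat -> nat -> R :=
  match k with
  | O => mid
  | S k' => mmul n (mpow n C k') C
  end.

Definition nonneg_mat (n : nat) (C : nat -> nat -> R) : Prop :=
  forall i j, (i < n)%nat -> (j < n)%nat -> 0 <= C i j.

Definition doubly_stochastic (n : nat) (C : nat -> nat -> R) : Prop :=
  nonneg_mat n C /\
  (forall i, (i < n)%nat -> vsum n (fun j => C i j) = 1) /\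
  (forall j, (j < n)%nat -> vsum n (fun i => C i j) = 1).

Definition irreducible (n : nat) (C : nat -> nat -> R) : Prop :=
  forall i j, (i < n)%nat -> (j < n)%nat -> exists k : nat, 0 < mpow n C k i j.

Definition zero_diag (n : nat) (C : nat -> nat -> R) : Prop :=
  forall i, (i < n)%nat -> C i i = 0.

Definition in_simplex (n : nat) (x : nat -> R) : Prop :=
  (forall i, (i < n)%nat -> 0 <= x i) /\ vsum n x = 1.

Definition is_basis_vec (n : nat) (k : nat) (x : nat -> R) : Prop :=
  forall i, (i < n)%nat -> x i = if Nat.eqb i k then 1 else 0.

(* One step of the modified DeGroot-Friedkin model, component i:
   (C^T x + X x - C^T X x)_i with X = diag(x). *)
Definition mdf_step (n : nat) (C : nat -> nat -> R) (x : nat -> R) : nat -> R :=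
  fun i => vsum n (fun j => C j i * x j) + x i * x i
           - vsum n (fun j => C j i * (x j * x j)).

From Stdlib Require Import Reals Lra Lia.
Open Scope R_scope.

(* The largest coordinate never increases, so every [x s] stays in the simplex with all
   coordinates at most [a := max_i x O i < 1], and the smallest coordinate [mu s] is
   nondecreasing and hence convergent. Since [n >= 3], one step gives, with [b := (1 - a) / 2],
   [x (s+1) i - mu s >= (x s i - mu s)^2 + b * sum_j C j i (x s j - mu s)]: an excess of some
   coordinate over the minimum is transported along the paths of [C], reaching every coordinate
   within a uniform number [K] of steps by irreducibility, and is at worst squared along the way.
   So [mu (s + K) - mu s] dominates a fixed power of the largest excess at time [s]; as [mu]
   converges, all excesses vanish, and [sum_i x s i = 1] forces every coordinate to [1 / n]. *)

Lemma vsum_ext n f g : (forall i, (i < n)%nat -> f i = g i) -> vsum n f = vsum n g.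
Proof.
  induction n as [|n IH]; simpl; intros H; auto.
  rewrite IH by (intros; apply H; lia). rewrite H by lia. reflexivity.
Qed.

Lemma vsum_add n f g : vsum n (fun i => f i + g i) = vsum n f + vsum n g.
Proof. induction n as [|n IH]; simpl; [lra|]. rewrite IH; lra. Qed.

Lemma vsum_sub n f g : vsum n (fun i => f i - g i) = vsum n f - vsum n g.
Proof. induction n as [|n IH]; simpl; [lra|]. rewrite IH; lra. Qed.

Lemma vsum_scal_l n c f : vsum n (fun i => c * f i) = c * vsum n f.
Proof. induction n as [|n IH]; simpl; [lra|]. rewrite IH; lra. Qed.

Lemma vsum_scal_r n c f : vsum n (fun i => f i * c) = vsum n f * c.
Proof. induction n as [|n IH]; simpl; [lra|]. rewrite IH; lra. Qed.

Lemma vsum_const n c : vsum n (fun _ => c) = INR n * c.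
Proof. induction n as [|n IH]; simpl vsum; [simpl; lra|]. rewrite IH, S_INR; lra. Qed.

Lemma vsum_le n f g : (forall i, (i < n)%nat -> f i <= g i) -> vsum n f <= vsum n g.
Proof.
  induction n as [|n IH]; simpl; intros H; [lra|].
  assert (f n <= g n) by (apply H; lia).
  assert (vsum n f <= vsum n g) by (apply IH; intros; apply H; lia). lra.
Qed.

Lemma vsum_nonneg n f : (forall i, (i < n)%nat -> 0 <= f i) -> 0 <= vsum n f.
Proof.
  intros H. rewrite <- (Rmult_0_r (INR n)), <- vsum_const. apply vsum_le; auto.
Qed.

Lemma vsum_comm n m F :
  vsum n (fun i => vsum m (fun j => F i j)) = vsum m (fun j => vsum n (fun i => F i j)).
Proof.
  induction n as [|n IH]; simpl.
  - induction m as [|m IHm]; simpl; [lra|]. rewrite <- IHm; lra.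
  - rewrite IH, <- vsum_add. reflexivity.
Qed.

Lemma vsum_delta n a f :
  (a < n)%nat -> vsum n (fun i => if Nat.eqb i a then f i else 0) = f a.
Proof.
  induction n as [|n IH]; intros Ha; [lia|]. simpl.
  destruct (Nat.eq_dec a n) as [->|Hne].
  - rewrite Nat.eqb_refl, (vsum_ext _ _ (fun _ => 0)), vsum_const; [lra|].
    intros i Hi. destruct (Nat.eqb_spec i n); [lia|auto].
  - rewrite IH by lia. destruct (Nat.eqb_spec n a); [lia|lra].
Qed.

Lemma vsum_ge2 n f a b :
  (forall i, (i < n)%nat -> 0 <= f i) -> (a < n)%nat -> (b < n)%nat -> a <> b ->
  f a + f b <= vsum n f.
Proof.
  intros H Ha Hb Hab.
  rewrite <- (vsum_delta n a f), <- (vsum_delta n b f), <- vsum_add by auto.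
  apply vsum_le. intros i Hi. specialize (H i Hi).
  destruct (Nat.eqb_spec i a), (Nat.eqb_spec i b); subst; try lia; lra.
Qed.

Lemma vsum_ge3 n f a b c :
  (forall i, (i < n)%nat -> 0 <= f i) -> (a < n)%nat -> (b < n)%nat -> (c < n)%nat ->
  a <> b -> a <> c -> b <> c ->
  f a + f b + f c <= vsum n f.
Proof.
  intros H Ha Hb Hc Hab Hac Hbc.
  rewrite <- (vsum_delta n a f), <- (vsum_delta n b f), <- (vsum_delta n c f),
    <- !vsum_add by auto.
  apply vsum_le. intros i Hi. specialize (H i Hi).
  destruct (Nat.eqb_spec i a), (Nat.eqb_spec i b), (Nat.eqb_spec i c); subst; try lia; lra.
Qed.

(* [vmin m f] is the minimum of [f 0, ..., f m] (note: [m + 1] values, unlike [vsum m f]). *)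
Fixpoint vmin (m : nat) (f : nat -> R) : R :=
  match m with O => f O | S k => Rmin (vmin k f) (f (S k)) end.

Lemma vmin_le m f i : (i <= m)%nat -> vmin m f <= f i.
Proof.
  induction m as [|m IH]; intros H; simpl.
  - replace i with 0%nat by lia. lra.
  - destruct (Nat.eq_dec i (S m)) as [->|]; [apply Rmin_r|].
    eapply Rle_trans; [apply Rmin_l|]. apply IH; lia.
Qed.

Lemma vmin_attained m f : exists i, (i <= m)%nat /\ vmin m f = f i.
Proof.
  induction m as [|m [i [Hi E]]]; simpl.
  - exists 0%nat; auto.
  - unfold Rmin. destruct (Rle_dec (vmin m f) (f (S m))).
    + exists i; split; [lia|auto].
    + exists (S m); auto.
Qed.

Lemma argmax_exists n f :
  (0 < n)%nat -> exists p, (p < n)%nat /\ forall j, (j < n)%nat -> f j <= f p.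
Proof.
  intros Hn. destruct (vmin_attained (n - 1) (fun j => - f j)) as [p [Hp E]].
  exists p. split; [lia|]. intros j Hj.
  pose proof (vmin_le (n - 1) (fun j => - f j) j ltac:(lia)). simpl in *. lra.
Qed.

Lemma simplex_coord_lt_1 n v p :
  (2 <= n)%nat -> in_simplex n v -> (p < n)%nat -> ~ is_basis_vec n p v -> v p < 1.
Proof.
  intros Hn [Hv0 Hv1] Hp Hnb. destruct (Rlt_dec (v p) 1) as [|Hge]; auto.
  exfalso. apply Hnb. intros j Hj. destruct (Nat.eqb_spec j p) as [->|Hjp].
  - set (q := if Nat.eqb p 0 then 1%nat else 0%nat).
    assert (Hq : (q < n)%nat /\ p <> q) by (unfold q; destruct (Nat.eqb_spec p 0); lia).
    pose proof (vsum_ge2 n v p q Hv0 Hp (proj1 Hq) (proj2 Hq)). pose proof (Hv0 q (proj1 Hq)).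
    lra.
  - pose proof (vsum_ge2 n v j p Hv0 Hj Hp Hjp). pose proof (Hv0 j Hj). lra.
Qed.

Lemma Rle_pow_le_1 (b : R) m k : 0 <= b <= 1 -> (m <= k)%nat -> b ^ k <= b ^ m.
Proof.
  intros Hb Hmk. replace k with (m + (k - m))%nat by lia. rewrite pow_add.
  assert (0 <= b ^ m) by (apply pow_le; lra).
  assert (b ^ (k - m) <= 1) by (rewrite <- (pow1 (k - m)); apply pow_incr; lra).
  assert (0 <= b ^ (k - m)) by (apply pow_le; lra).
  nra.
Qed.

Lemma mdf_step_alt n C x i :
  mdf_step n C x i = x i * x i + vsum n (fun j => C j i * (x j - x j * x j)).
Proof.
  unfold mdf_step.
  rewrite (vsum_ext n (fun j => C j i * (x j - x j * x j))
    (fun j => C j i * x j - C j i * (x j * x j))) by (intros; ring).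
  rewrite vsum_sub. ring.
Qed.

Lemma mdf_step_sum n C x :
  (forall j, (j < n)%nat -> vsum n (fun i => C j i) = 1) ->
  vsum n x = 1 -> vsum n (mdf_step n C x) = 1.
Proof.
  intros Hrow Hx. unfold mdf_step.
  rewrite vsum_sub, vsum_add,
    (vsum_comm n n (fun i j => C j i * x j)), (vsum_comm n n (fun i j => C j i * (x j * x j))).
  rewrite (vsum_ext n (fun j => vsum n (fun i => C j i * x j)) x).
  2:{ intros j Hj. rewrite vsum_scal_r, Hrow by auto. ring. }
  rewrite (vsum_ext n (fun j => vsum n (fun i => C j i * (x j * x j))) (fun j => x j * x j)).
  2:{ intros j Hj. rewrite vsum_scal_r, Hrow by auto. ring. }
  lra.
Qed.

(* For [j <> p], [x j + x p <= 1] gives [x j - x j^2 <= x p - x p^2]. *)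
Lemma mdf_step_le_max n C x p :
  (2 <= n)%nat -> nonneg_mat n C ->
  (forall i, (i < n)%nat -> vsum n (fun j => C j i) = 1) ->
  in_simplex n x -> (p < n)%nat -> (forall j, (j < n)%nat -> x j <= x p) ->
  forall i, (i < n)%nat -> mdf_step n C x i <= x p.
Proof.
  intros Hn HC Hcol [Hx0 Hx1] Hp Hmax i Hi. rewrite mdf_step_alt.
  assert (Hsum : vsum n (fun j => C j i * (x j - x j * x j))
                 <= vsum n (fun j => C j i * (x p - x p * x p))).
  { apply vsum_le. intros j Hj. apply Rmult_le_compat_l; [apply HC; auto|].
    destruct (Nat.eq_dec j p) as [->|Hjp]; [lra|].
    assert (x j + x p <= 1) by (rewrite <- Hx1; apply vsum_ge2; auto).
    assert (0 <= (x p - x j) * (1 - x p - x j))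
      by (apply Rmult_le_pos; specialize (Hmax j Hj); lra).
    nra. }
  rewrite vsum_scal_r, Hcol in Hsum by auto.
  specialize (Hmax i Hi). specialize (Hx0 i Hi).
  assert (x i * x i <= x p * x p) by (apply Rmult_le_compat; lra). lra.
Qed.

(* Column sums give [mdf_step x i - c = (x i - c)^2 + 2 c (x i - c)
   + sum_j C j i (x j - c) (1 - x j - c)]. *)
Lemma mdf_step_lower_bound n C x c b :
  nonneg_mat n C ->
  (forall i, (i < n)%nat -> vsum n (fun j => C j i) = 1) ->
  0 <= c -> (forall j, (j < n)%nat -> c <= x j) ->
  (forall j, (j < n)%nat -> b <= 1 - x j - c) ->
  forall i, (i < n)%nat ->
  (x i - c) ^ 2 + b * vsum n (fun j => C j i * (x j - c)) <= mdf_step n C x i - c.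
Proof.
  intros HC Hcol Hc Hxc Hb i Hi. rewrite mdf_step_alt.
  assert (Ec : c = c * c + vsum n (fun j => C j i * (c - c * c))).
  { rewrite vsum_scal_r, Hcol by auto. ring. }
  assert (Hsum : vsum n (fun j => b * (C j i * (x j - c))) <=
                 vsum n (fun j => C j i * (x j - x j * x j)) - vsum n (fun j => C j i * (c - c * c))).
  { rewrite <- vsum_sub. apply vsum_le. intros j Hj.
    specialize (HC j i Hj Hi). specialize (Hxc j Hj). specialize (Hb j Hj).
    assert (0 <= C j i * (x j - c)) by (apply Rmult_le_pos; lra).
    replace (C j i * (x j - x j * x j) - C j i * (c - c * c))
      with (C j i * (x j - c) * (1 - x j - c)) by ring.
    rewrite (Rmult_comm b). apply Rmult_le_compat_l; lra. }
  rewrite vsum_scal_l in Hsum. specialize (Hxc i Hi).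
  assert (0 <= c * (x i - c)) by (apply Rmult_le_pos; lra).
  nra.
Qed.

Lemma finite_uniform_bound m (P : nat -> nat -> R -> Prop) :
  (forall i K p K' p', P i K p -> (K <= K')%nat -> 0 < p' <= p -> P i K' p') ->
  (forall i, (i < m)%nat -> exists K p, 0 < p <= 1 /\ P i K p) ->
  exists K p, 0 < p <= 1 /\ forall i, (i < m)%nat -> P i K p.
Proof.
  intros Hmono. induction m as [|m IH]; intros H.
  - exists 0%nat, 1. split; [lra|]. intros; lia.
  - destruct IH as [K1 [p1 [Hp1 H1]]]; [intros; apply H; lia|].
    destruct (H m ltac:(lia)) as [K2 [p2 [Hp2 H2]]].
    assert (Hmin : 0 < Rmin p1 p2) by (apply Rmin_glb_lt; lra).
    exists (Nat.max K1 K2), (Rmin p1 p2). split.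
    + split; [lra|]. eapply Rle_trans; [apply Rmin_l|lra].
    + intros i Hi. destruct (Nat.eq_dec i m) as [->|].
      * eapply Hmono; [apply H2|lia|]. split; [lra|apply Rmin_r].
      * eapply Hmono; [apply H1; lia|lia|]. split; [lra|apply Rmin_l].
Qed.

Lemma irreducible_uniform n C :
  irreducible n C ->
  exists K p, 0 < p <= 1 /\ forall i, (i < n)%nat -> forall j, (j < n)%nat ->
    exists k, (k <= K)%nat /\ p <= mpow n C k i j.
Proof.
  intros Hirr.
  apply (finite_uniform_bound n
    (fun i K p => forall j, (j < n)%nat -> exists k, (k <= K)%nat /\ p <= mpow n C k i j)).
  - intros i K p K' p' Hi HKK Hpp j Hj. destruct (Hi j Hj) as [k [Hk Hpk]].
    exists k; split; [lia|lra].
  - intros i Hi.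
    apply (finite_uniform_bound n (fun j K p => exists k, (k <= K)%nat /\ p <= mpow n C k i j)).
    + intros j K p K' p' [k [Hk Hpk]] HKK Hpp. exists k; split; [lia|lra].
    + intros j Hj. destruct (Hirr i j Hi Hj) as [k Hk].
      exists k, (Rmin (mpow n C k i j) 1). split.
      * split; [apply Rmin_glb_lt; lra|apply Rmin_r].
      * exists k; split; [lia|apply Rmin_l].
Qed.

Lemma growing_bounded_increments (u : nat -> R) K delta :
  Un_growing u -> has_ub u -> 0 < delta ->
  exists S, forall s, (S <= s)%nat -> u (s + K)%nat - u s < delta.
Proof.
  intros Hgrow Hub Hdelta. destruct (growing_cv u Hgrow Hub) as [l Hl].
  destruct (Hl (delta / 2) ltac:(lra)) as [S HS]. exists S. intros s Hs.
  pose proof (HS s Hs) as H1. pose proof (HS (s + K)%nat ltac:(lia)) as H2.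
  unfold R_dist in *. apply Rabs_def2 in H1, H2. lra.
Qed.

Lemma close_to_mean n v m e :
  (0 < n)%nat -> vsum n v = 1 -> (forall j, (j < n)%nat -> m <= v j <= m + e) ->
  forall i, (i < n)%nat -> Rabs (v i - 1 / INR n) <= e.
Proof.
  intros Hn Hv Hm i Hi.
  assert (HnR : 0 < INR n) by (apply lt_0_INR; lia).
  assert (Hlo : INR n * m <= 1).
  { rewrite <- Hv, <- vsum_const. apply vsum_le. intros j Hj. apply Hm; auto. }
  assert (Hhi : 1 <= INR n * (m + e)).
  { rewrite <- Hv, <- vsum_const. apply vsum_le. intros j Hj. apply Hm; auto. }
  assert (Hq : INR n * (1 / INR n) = 1) by (field; lra).
  assert (m <= 1 / INR n <= m + e) by nra.
  specialize (Hm i Hi). apply Rabs_le. lra.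
Qed.

Section Trajectory.

Variables (n : nat) (C : nat -> nat -> R) (x : nat -> nat -> R) (a : R).

Hypotheses (Hn : (3 <= n)%nat) (HC : nonneg_mat n C)
  (Hrow : forall j, (j < n)%nat -> vsum n (fun i => C j i) = 1)
  (Hcol : forall i, (i < n)%nat -> vsum n (fun j => C j i) = 1)
  (Hstep : forall s i, (i < n)%nat -> x (S s) i = mdf_step n C (x s) i)
  (Hirr : irreducible n C) (Hx0 : in_simplex n (x O))
  (Hx0a : forall i, (i < n)%nat -> x O i <= a) (Ha1 : a < 1).

Lemma traj_invariant t : in_simplex n (x t) /\ forall i, (i < n)%nat -> x t i <= a.
Proof.
  induction t as [|t [[Ht0 Ht1] Hta]]; [auto|]. split; [split|].
  - intros i Hi. rewrite Hstep by auto.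
    assert (H := mdf_step_lower_bound n C (x t) 0 0 HC Hcol (Rle_refl 0) Ht0).
    specialize (H ltac:(intros j Hj; specialize (Hta j Hj); lra) i Hi).
    pose proof (pow2_ge_0 (x t i - 0)). lra.
  - rewrite (vsum_ext n (x (S t)) (mdf_step n C (x t))) by auto.
    apply mdf_step_sum; auto.
  - intros i Hi. destruct (argmax_exists n (x t)) as [p [Hp Hmax]]; [lia|].
    rewrite Hstep by auto.
    eapply Rle_trans; [apply (mdf_step_le_max n C (x t) p); try split; auto; lia|auto].
Qed.

Lemma a_nonneg : 0 <= a.
Proof. pose proof (proj1 Hx0 0%nat ltac:(lia)). pose proof (Hx0a 0%nat ltac:(lia)). lra. Qed.

Definition mu t := vmin (n - 1) (x t).

Lemma mu_le t i : (i < n)%nat -> mu t <= x t i.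
Proof. intros. apply vmin_le. lia. Qed.

Lemma mu_attained t : exists i, (i < n)%nat /\ mu t = x t i.
Proof. destruct (vmin_attained (n - 1) (x t)) as [i [Hi E]]. exists i. split; [lia|auto]. Qed.

Lemma mu_nonneg t : 0 <= mu t.
Proof.
  destruct mu_attained with t as [i [Hi ->]]. apply (traj_invariant t); auto.
Qed.

Lemma mu_le_1 t : mu t <= 1.
Proof.
  destruct (traj_invariant t) as [[Ht0 Ht1] _].
  pose proof (vsum_ge2 n (x t) 0 1 Ht0 ltac:(lia) ltac:(lia) ltac:(lia)).
  pose proof (mu_le t 0 ltac:(lia)). pose proof (Ht0 1%nat ltac:(lia)). lra.
Qed.

(* Two further coordinates, each at least [mu t], share the mass [1 - x t j]; this is the only
   place where [n >= 3] is needed. *)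
Lemma mu_gap t j : (j < n)%nat -> (1 - a) / 2 <= 1 - x t j - mu t.
Proof.
  intros Hj. destruct (traj_invariant t) as [[Ht0 Ht1] Hta].
  assert (exists k1 k2, (k1 < n)%nat /\ (k2 < n)%nat /\ j <> k1 /\ j <> k2 /\ k1 <> k2)
    as [k1 [k2 (Hk1 & Hk2 & Hj1 & Hj2 & H12)]].
  { destruct j as [|[|j]]; [exists 1%nat, 2%nat|exists 0%nat, 2%nat|exists 0%nat, 1%nat]; lia. }
  pose proof (vsum_ge3 n (x t) j k1 k2 Ht0 Hj Hk1 Hk2 Hj1 Hj2 H12).
  pose proof (mu_le t k1 Hk1). pose proof (mu_le t k2 Hk2). specialize (Hta j Hj). lra.
Qed.

Lemma traj_lower_step c t : 0 <= c -> c <= mu t -> forall i, (i < n)%nat ->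
  (x t i - c) ^ 2 + (1 - a) / 2 * vsum n (fun j => C j i * (x t j - c)) <= x (S t) i - c.
Proof.
  intros Hc Hct i Hi. rewrite Hstep by auto. apply mdf_step_lower_bound; auto.
  - intros j Hj. pose proof (mu_le t j Hj). lra.
  - intros j Hj. pose proof (mu_gap t j Hj). lra.
Qed.

Lemma mu_growing : Un_growing mu.
Proof.
  intros t. destruct (mu_attained (S t)) as [i [Hi ->]].
  pose proof (traj_lower_step (mu t) t (mu_nonneg t) (Rle_refl _) i Hi).
  assert (0 <= vsum n (fun j => C j i * (x t j - mu t))).
  { apply vsum_nonneg. intros j Hj.
    apply Rmult_le_pos; [apply HC; auto|]. pose proof (mu_le t j Hj); lra. }
  pose proof (pow2_ge_0 (x t i - mu t)).
  assert (0 <= (1 - a) / 2 * vsum n (fun j => C j i * (x t j - mu t)))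
    by (apply Rmult_le_pos; [lra|auto]).
  lra.
Qed.

Lemma mu_mono t m : mu t <= mu (t + m).
Proof. apply tech9; [apply mu_growing|lia]. Qed.

Lemma excess_propagates s i k j : (i < n)%nat -> (j < n)%nat ->
  ((1 - a) / 2) ^ k * mpow n C k i j * (x s i - mu s) <= x (s + k)%nat j - mu s.
Proof.
  intros Hi. revert j. set (b := (1 - a) / 2). set (c := mu s).
  assert (Hc : 0 <= c) by apply mu_nonneg.
  induction k as [|k IH]; intros j Hj.
  - rewrite Nat.add_0_r. simpl. unfold mid. destruct (Nat.eqb_spec i j) as [->|]; [lra|].
    pose proof (mu_le s j Hj). unfold c. lra.
  - rewrite Nat.add_succ_r.
    pose proof (traj_lower_step c (s + k) Hc (mu_mono s k) j Hj) as Hu.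
    assert (E : b ^ S k * mpow n C (S k) i j * (x s i - c) =
                b * vsum n (fun l => C l j * (b ^ k * mpow n C k i l * (x s i - c)))).
    { simpl mpow. unfold mmul.
      rewrite (vsum_ext n (fun l => C l j * (b ^ k * mpow n C k i l * (x s i - c)))
                 (fun l => (b ^ k * (x s i - c)) * (mpow n C k i l * C l j))) by (intros; ring).
      rewrite vsum_scal_l. simpl. ring. }
    rewrite E.
    assert (vsum n (fun l => C l j * (b ^ k * mpow n C k i l * (x s i - c))) <=
            vsum n (fun l => C l j * (x (s + k)%nat l - c))).
    { apply vsum_le. intros l Hl. apply Rmult_le_compat_l; [apply HC; auto|]. apply IH; auto. }
    assert (0 <= b) by (unfold b; lra).
    pose proof (pow2_ge_0 (x (s + k)%nat j - c)).
    assert (b * vsum n (fun l => C l j * (b ^ k * mpow n C k i l * (x s i - c))) <=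
            b * vsum n (fun l => C l j * (x (s + k)%nat l - c))) by (apply Rmult_le_compat_l; auto).
    unfold b in *. lra.
Qed.

Lemma excess_squares c t0 m j w : 0 <= c -> c <= mu t0 -> (j < n)%nat ->
  0 <= w -> w <= x t0 j - c -> w ^ (2 ^ m) <= x (t0 + m)%nat j - c.
Proof.
  intros Hc Hct Hj Hw. revert j Hj. induction m as [|m IH]; intros j Hj Hwx.
  - simpl. rewrite Nat.add_0_r. lra.
  - rewrite Nat.add_succ_r.
    assert (Hcm : c <= mu (t0 + m)) by (pose proof (mu_mono t0 m); lra).
    pose proof (traj_lower_step c (t0 + m) Hc Hcm j Hj).
    assert (0 <= vsum n (fun l => C l j * (x (t0 + m)%nat l - c))).
    { apply vsum_nonneg. intros l Hl.
      apply Rmult_le_pos; [apply HC; auto|]. pose proof (mu_le (t0 + m) l Hl); lra. }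
    assert (0 <= (1 - a) / 2 * vsum n (fun l => C l j * (x (t0 + m)%nat l - c)))
      by (apply Rmult_le_pos; [lra|auto]).
    assert (w ^ (2 ^ m) <= x (t0 + m)%nat j - c) by auto.
    assert (0 <= w ^ (2 ^ m)) by (apply pow_le; auto).
    replace (w ^ (2 ^ S m)) with (w ^ (2 ^ m) * w ^ (2 ^ m))
      by (rewrite <- pow_add; f_equal; rewrite Nat.pow_succ_r'; lia).
    assert (w ^ (2 ^ m) * w ^ (2 ^ m) <= (x (t0 + m)%nat j - c) ^ 2)
      by (simpl; rewrite Rmult_1_r; apply Rmult_le_compat; auto).
    lra.
Qed.

Lemma mu_jump K p s i : 0 < p <= 1 ->
  (forall i, (i < n)%nat -> forall j, (j < n)%nat -> exists k, (k <= K)%nat /\ p <= mpow n C k i j) ->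
  (i < n)%nat ->
  (((1 - a) / 2) ^ K * p * (x s i - mu s)) ^ (2 ^ K) <= mu (s + K)%nat - mu s.
Proof.
  intros Hp HK Hi. set (b := (1 - a) / 2). set (c := mu s).
  assert (Hb : 0 <= b <= 1) by (pose proof a_nonneg; unfold b; lra).
  assert (Hc : 0 <= c) by apply mu_nonneg.
  assert (Hd : 0 <= x s i - c <= 1).
  { pose proof (mu_le s i Hi). destruct (traj_invariant s) as [_ Hsa].
    specialize (Hsa i Hi). unfold c in *. lra. }
  assert (HbK : 0 <= b ^ K <= 1) by (split; [apply pow_le|rewrite <- (pow1 K); apply pow_incr]; lra).
  set (w := b ^ K * p * (x s i - c)).
  assert (Hw : 0 <= w <= 1).
  { unfold w. assert (0 <= b ^ K * p <= 1) by (split; [apply Rmult_le_pos|]; nra). nra. }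
  destruct (mu_attained (s + K)) as [j [Hj ->]].
  destruct (HK i Hi j Hj) as [k [Hk Hpk]].
  assert (Hwk : w <= x (s + k)%nat j - c).
  { pose proof (excess_propagates s i k j Hi Hj) as Hprop. fold b c in Hprop.
    eapply Rle_trans; [|exact Hprop]. unfold w.
    apply Rmult_le_compat_r; [lra|]. apply Rmult_le_compat; try lra.
    apply Rle_pow_le_1; auto. }
  pose proof (excess_squares c (s + k) (K - k) j w Hc (mu_mono s k) Hj (proj1 Hw) Hwk) as Hsq.
  replace (s + k + (K - k))%nat with (s + K)%nat in Hsq by lia.
  eapply Rle_trans; [|apply Hsq]. apply Rle_pow_le_1; auto.
  apply Nat.pow_le_mono_r; lia.
Qed.

Lemma spread_vanishes e : 0 < e ->
  exists S, forall s, (S <= s)%nat -> forall j, (j < n)%nat -> x s j - mu s < e.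
Proof.
  intros He. destruct (irreducible_uniform n C Hirr) as [K [p [Hp HK]]].
  set (b := (1 - a) / 2).
  assert (Hb : 0 < b) by (unfold b; lra).
  assert (HbKp : 0 < b ^ K * p) by (apply Rmult_lt_0_compat; [apply pow_lt|]; lra).
  set (delta := (b ^ K * p * e) ^ (2 ^ K)).
  assert (Hub : has_ub mu).
  { exists 1. intros r [t ->]. apply mu_le_1. }
  destruct (growing_bounded_increments mu K delta mu_growing Hub)
    as [S HS]; [apply pow_lt; nra|].
  exists S. intros s Hs j Hj. destruct (Rlt_dec (x s j - mu s) e) as [|Hge]; auto.
  pose proof (mu_jump K p s j Hp HK Hj) as Hjump. fold b in Hjump.
  assert (delta <= (b ^ K * p * (x s j - mu s)) ^ (2 ^ K)) by (apply pow_incr; nra).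
  specialize (HS s Hs). lra.
Qed.

Lemma traj_cv i : (i < n)%nat -> Un_cv (fun s => x s i) (1 / INR n).
Proof.
  intros Hi eps Heps. destruct (spread_vanishes (eps / 2)) as [S HS]; [lra|].
  exists S. intros s Hs. unfold R_dist.
  assert (Rabs (x s i - 1 / INR n) <= eps / 2); [|lra].
  apply (close_to_mean n (x s) (mu s)); auto; [lia|apply (traj_invariant s)|].
  intros j Hj. pose proof (mu_le s j Hj). specialize (HS s Hs j Hj). lra.
Qed.

End Trajectory.

Theorem theorem4 (n : nat) (C : nat -> nat -> R) (x : nat -> nat -> R) :
  (3 <= n)%nat ->
  nonneg_mat n C ->
  doubly_stochastic n C ->
  irreducible n C ->
  zero_diag n C ->
  (forall s i, (i < n)%nat -> x (S s) i = mdf_step n C (x s) i) ->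
  in_simplex n (x O) ->
  (forall k, (k < n)%nat -> ~ is_basis_vec n k (x O)) ->
  forall i, (i < n)%nat -> Un_cv (fun s => x s i) (1 / INR n).
Proof.
  intros Hn HC [_ [Hrow Hcol]] Hirr _ Hstep Hx0 Hnb.
  destruct (argmax_exists n (x O)) as [p [Hp Hmax]]; [lia|].
  apply (traj_cv n C x (x O p)); auto.
  apply simplex_coord_lt_1 with n; auto; lia.
Qed.
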